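(* Let $(X,Y,E)$ be a bipartite graph in which every vertex has degree at most $d_{max}$. For non-negative integers $k\le|X|$ and $l\le|Y|$ let $s=\frac{kl|E|}{|X||Y|}$. Then for every real $0\le\gamma<1/2$, $$\Pr_{S\sim\binom{X}{k},\,T\sim\binom{Y}{l}}\big[|E(S,T)|\notin[(1-\gamma)s,(1+\gamma)s]\big]\le4\exp\left(-\frac{\gamma^2s}{54d_{max}}\right).$$
   Context: $S$ and $T$ are sampled independently and uniformly among subsets of $X$ of size $k$ and subsets of $Y$ of size $l$, respectively. $E(S,T)$ denotes the set of edges with one endpoint in $S$ and the other in $T$. *)

From HB Require Import structures.
From mathcomp Require Import all_boot all_order all_algebra.
From mathcomp Require Import all_classical all_reals all_analysis.
Set Implicit Arguments. Unset Strict Implicit. Unset Printing Implicit Defensive.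
Import Order.TTheory GRing.Theory Num.Theory.
Local Open Scope ring_scope.

Definition edges_between (X Y : finType) (E : {set X * Y})
  (S : {set X}) (T : {set Y}) : {set X * Y} := E :&: finset.setX S T.

Definition degX (X Y : finType) (E : {set X * Y}) (x : X) : nat :=
  #|[set y : Y | (x, y) \in E]|.
Definition degY (X Y : finType) (E : {set X * Y}) (y : Y) : nat :=
  #|[set x : X | (x, y) \in E]|.

Definition ksubsets (T : finType) (k : nat) : {set {set T}} :=
  [set S : {set T} | #|S| == k].

Definition prob_ST (R : realType) (X Y : finType) (k l : nat)
  (B : {set X} -> {set Y} -> bool) : R :=
  (#|[set p : {set X} * {set Y} |
        [&& p.1 \in ksubsets X k, p.2 \in ksubsets Y l & B p.1 p.2]]|)%:R
  / (#|ksubsets X k| * #|ksubsets Y l|)%:R.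

(* Write |E(S,T)| = sum_{x in S} w_T(x), where w_T(x) <= dmax counts the
   neighbours of x in T.  A uniform k-subset S of an n-set is negatively
   correlated: P(A <= S) <= (k/n)^|A| and P(A disjoint from S) <= (1 - k/n)^|A|.
   Expanding prod_{i in S} (1 + c_i) over subsets therefore bounds the moment
   generating function of sum_{i in S} w_i by that of independent sampling with
   probability k/n, and the usual Chernoff bounds follow for weights in [0, D].
   Let eps = exp (- gamma^2 s / (54 dmax)).  The Chernoff bounds are applied
   twice: to the degree sum of T, which lies within a factor 1 +- 2 gamma / 5 of
   its mean l |E| / |Y| except with probability 2 eps; and, for each such T, to
   sum_{x in S} w_T(x), whose mean then lies within (1 +- 2 gamma / 5) s, so that
   the remaining relative margin gamma / 2 is exceeded with probability 2 eps. *)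

From HB Require Import structures.
From mathcomp Require Import all_boot all_order all_algebra.
From mathcomp Require Import all_classical all_reals all_analysis.
From mathcomp Require Import zify ring lra.
Import Order.TTheory GRing.Theory Num.Theory.
Set Implicit Arguments. Unset Strict Implicit.

Lemma leq_bin_pred_mul (m j a : nat) : (0 < j <= m)%N ->
  ('C(m.-1, j.-1) * (m + a) <= 'C(m, j) * (j + a))%N.
Proof.
case/andP=> j_gt0 le_jm; have m_gt0 : (0 < m)%N by lia.
have := mul_bin_diag m j.-1; rewrite prednK // => diag.
by rewrite -(leq_pmul2l m_gt0) mulnA diag; nia.
Qed.

Lemma leq_bin_subn (n k a : nat) : (a <= k <= n)%N ->
  ('C(n - a, k - a) * n ^ a <= 'C(n, k) * k ^ a)%N.
Proof.
case/andP; elim: a => [|a IHa] lt_ak le_kn; first by rewrite !subn0 !expn0.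
have step := @leq_bin_pred_mul (n - a) (k - a) a.
rewrite !subnK in step; [|lia|lia].
have /step le_step : (0 < k - a <= n - a)%N by lia.
rewrite !expnS !subnS !mulnA.
apply: leq_trans (leq_mul le_step (leqnn (n ^ a))) _.
by rewrite mulnAC [X in (_ <= X)%N]mulnAC leq_mul2r (IHa (ltnW lt_ak) le_kn) orbT.
Qed.

Lemma card_ksubsets (T : finType) (k : nat) : #|ksubsets T k| = 'C(#|T|, k).
Proof. exact: card_draws. Qed.

Lemma leq_card_ksubsets_supset (T : finType) (A : {set T}) (k : nat) : (k <= #|T|)%N ->
  (#|[set S in ksubsets T k | A \subset S]| * #|T| ^ #|A|
     <= 'C(#|T|, k) * k ^ #|A|)%N.
Proof.
move=> le_kT; have [le_Ak|lt_kA] := leqP #|A| k; last first.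
  suff -> : [set S in ksubsets T k | A \subset S] = finset.set0 by rewrite cards0.
  apply/setP => S; rewrite !inE; apply/negbTE/andP => -[/eqP card_S].
  by move/subset_leq_card; rewrite card_S leqNgt lt_kA.
have le_bin : ('C(#|T| - #|A|, k - #|A|) * #|T| ^ #|A| <= 'C(#|T|, k) * k ^ #|A|)%N.
  by apply: leq_bin_subn; rewrite le_Ak.
apply: leq_trans le_bin.
rewrite leq_mul2r -(cardsC A) addKn -cards_draws; apply/orP; right.
apply: leq_trans (leq_imset_card (finset.setU A) _).
apply/subset_leq_card/fintype.subsetP => S.
rewrite !inE => /andP[/eqP card_S sub_AS]; apply/imsetP; exists (S :\: A).
  by rewrite inE subsetDr cardsDS // card_S eqxx.
by rewrite -[LHS](setID S A) (finset.setIidPr sub_AS).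
Qed.

Lemma leq_card_ksubsets_avoid (T : finType) (A : {set T}) (k : nat) : (k <= #|T|)%N ->
  (#|[set S in ksubsets T k | A \subset ~: S]| * #|T| ^ #|A|
     <= 'C(#|T|, k) * (#|T| - k) ^ #|A|)%N.
Proof.
move=> le_kT.
have -> : [set S in ksubsets T k | A \subset ~: S]
          = @finset.setC T @^-1: [set S in ksubsets T (#|T| - k) | A \subset S].
  apply/setP => S; rewrite !inE; congr (_ && _).
  by have cardS := cardsC S; apply/eqP/eqP; lia.
rewrite card_preimset; last exact: finset.setC_inj.
by rewrite -bin_sub //; apply: leq_card_ksubsets_supset; rewrite leq_subr.
Qed.

Local Open Scope ring_scope.

Lemma ler_natr_ratio_expn (R : numFieldType) (x c m n a : nat) : (a <= n)%N ->
  (x * n ^ a <= c * m ^ a)%N -> x%:R <= c%:R * (m%:R / n%:R) ^+ a :> R.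
Proof.
move=> le_an le_x; have [n0|n_gt0] := posnP n.
  by move: le_an le_x; rewrite n0 leqn0 => /eqP ->; rewrite !muln1 expr0 mulr1 ler_nat.
rewrite expr_div_n mulrA ler_pdivlMr ?exprn_gt0 ?ltr0n //.
by rewrite -!natrX -!natrM ler_nat.
Qed.

Lemma natr_ratio_01 (R : numFieldType) (m n : nat) :
  (m <= n)%N -> 0 <= (m%:R / n%:R : R) <= 1.
Proof.
move=> le_mn; rewrite divr_ge0 ?ler0n //=.
have [->|n_gt0] := posnP n; first by rewrite invr0 mulr0 ler01.
by rewrite ler_pdivrMr ?ltr0n // mul1r ler_nat.
Qed.

Lemma sumr_indicator (R : pzSemiRingType) (I : finType) (G : {set I}) (P : pred I) :
  \sum_(i in G) (P i)%:R = #|[set i in G | P i]|%:R :> R.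
Proof.
rewrite -sum1_card (eq_bigl (fun i => (i \in G) && P i)) => [|i]; last by rewrite !inE.
by rewrite big_mkcondr natr_sum; apply: eq_bigr => i _; case: (P i).
Qed.

Lemma prodr_if_indicator (R : comPzSemiRingType) (I : finType) (J B : {set I})
    (a b : I -> R) :
  \prod_i (if i \in J then b i * (i \in B)%:R else a i)
    = (J \subset B)%:R * \prod_i (if i \in J then b i else a i).
Proof.
have [sub_JB|/fintype.subsetPn[i iJ iNB]] := boolP (J \subset B).
  rewrite mul1r; apply: eq_bigr => i _.
  by case: ifP => // /(fintype.subsetP sub_JB) ->; rewrite mulr1.
by rewrite mul0r (bigD1 i) //= iJ (negbTE iNB) mulr0 mul0r.
Qed.

Lemma sum_prod_inclusion_le (R : numDomainType) (I : finType) (G : {set {set I}})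
    (g : {set I} -> {set I}) (a b : I -> R) (r : R) :
    (forall i, 0 <= a i) -> (forall i, 0 <= b i) -> 0 <= r ->
    (forall A : {set I}, #|[set S in G | A \subset g S]|%:R <= #|G|%:R * r ^+ #|A|) ->
  \sum_(S in G) \prod_i (b i * (i \in g S)%:R + a i)
    <= #|G|%:R * \prod_i (r * b i + a i).
Proof.
move=> a_ge0 b_ge0 r_ge0 le_incl.
have expand S : \prod_i (b i * (i \in g S)%:R + a i)
    = \sum_(J : {set I}) (J \subset g S)%:R * \prod_i (if i \in J then b i else a i).
  by rewrite (@bigA_distr R 0 1 *%R +%R); apply: eq_bigr => J _; rewrite prodr_if_indicator.
rewrite (eq_bigr _ (fun S _ => expand S)) exchange_big (@bigA_distr R 0 1 *%R +%R).
rewrite mulr_sumr; apply: ler_sum => J _; rewrite -mulr_suml sumr_indicator.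
have -> : \prod_i (if i \in J then r * b i else a i)
          = r ^+ #|J| * \prod_i (if i \in J then b i else a i).
  rewrite -prodr_const [X in _ = X * _]big_mkcond -big_split /=.
  by apply: eq_bigr => i _; case: ifP; rewrite ?mul1r.
rewrite mulrA ler_wpM2r //.
by apply: prodr_ge0 => i _; case: ifP.
Qed.

Lemma card_mul_le_sum (R : numDomainType) (I : finType) (G : {set I}) (P : pred I)
    (f : I -> R) (x : R) :
    (forall i, 0 <= f i) -> (forall i, i \in G -> P i -> x <= f i) ->
  #|[set i in G | P i]|%:R * x <= \sum_(i in G) f i.
Proof.
move=> f_ge0 le_xf; rewrite -sumr_indicator mulr_suml; apply: ler_sum => i iG.
by case: (boolP (P i)) => Pi; rewrite ?mul1r ?mul0r // le_xf.
Qed.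

Lemma prodr_1D_le_expR_sum (R : realType) (I : finType) (x : I -> R) :
  (forall i, 0 <= 1 + x i) -> \prod_i (1 + x i) <= expR (\sum_i x i).
Proof.
move=> x_ge; rewrite expR_sum; apply: ler_prod => i _.
by rewrite x_ge expR_ge1Dx.
Qed.

Section ExpBounds.
Variable R : realType.

Lemma expR_le_1Dquad (u : R) : 0 <= u -> u <= 1 / 2 -> expR u <= 1 + u + 2 * u ^+ 2.
Proof.
move=> u_ge0 u_le; have u_lt1 : 0 < 1 - u by lra.
rewrite -(ler_pM2r u_lt1); apply: le_trans (_ : 1 <= _); last by nra.
rewrite -[X in _ <= X](expR0 R) -(subrr u) expRD ler_pM2l ?expR_gt0 //.
by have := expR_ge1Dx (- u).
Qed.

Lemma expRN_le_1Bquad (u : R) : 0 <= u -> expR (- u) <= 1 - u + u ^+ 2.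
Proof.
move=> u_ge0; have u_gt : 0 < 1 + u by lra.
rewrite -(ler_pM2r u_gt); apply: le_trans (_ : 1 <= _); last by nra.
by rewrite -[X in _ <= X](expR0 R) -(addNr u) expRD ler_pM2l ?expR_gt0 // expR_ge1Dx.
Qed.

Lemma expR_mul_sub1_le (t v : R) : 0 <= t -> t <= 1 / 2 -> 0 <= v -> v <= 1 ->
  expR (t * v) - 1 <= (t + 2 * t ^+ 2) * v.
Proof.
move=> t_ge0 t_le v_ge0 v_le1.
have tv_le : t * v <= 1 / 2 by nra.
have := expR_le_1Dquad (mulr_ge0 t_ge0 v_ge0) tv_le.
have : (t * v) ^+ 2 <= t ^+ 2 * v by rewrite exprMn ler_wpM2l ?sqr_ge0 //; nra.
nra.
Qed.

Lemma expRN_mul_ge (t v : R) : 0 <= t -> 0 <= v -> v <= 1 ->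
  (t - t ^+ 2) * v <= 1 - expR (- (t * v)).
Proof.
move=> t_ge0 v_ge0 v_le1.
have := expRN_le_1Bquad (mulr_ge0 t_ge0 v_ge0).
have : (t * v) ^+ 2 <= t ^+ 2 * v by rewrite exprMn ler_wpM2l ?sqr_ge0 //; nra.
nra.
Qed.

Lemma sum_expR_sub1_le (I : finType) (w : I -> R) (D t : R) :
    0 < D -> (forall i, 0 <= w i <= D) -> 0 <= t -> t <= 1 / 2 ->
  \sum_i (expR (t / D * w i) - 1) <= (t + 2 * t ^+ 2) / D * \sum_i w i.
Proof.
move=> D_gt0 w0D t_ge0 t_le; rewrite mulr_sumr; apply: ler_sum => i _.
have [w_ge0 w_le] := andP (w0D i).
rewrite [t / D * _]mulrAC [_ / D * _]mulrAC -!mulrA; apply: expR_mul_sub1_le => //.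
  by rewrite divr_ge0 // ltW.
by rewrite ler_pdivrMr // mul1r.
Qed.

Lemma sum_1_sub_expRN_ge (I : finType) (w : I -> R) (D t : R) :
    0 < D -> (forall i, 0 <= w i <= D) -> 0 <= t ->
  (t - t ^+ 2) / D * \sum_i w i <= \sum_i (1 - expR (- (t / D * w i))).
Proof.
move=> D_gt0 w0D t_ge0; rewrite mulr_sumr; apply: ler_sum => i _.
have [w_ge0 w_le] := andP (w0D i).
rewrite [t / D * _]mulrAC [_ / D * _]mulrAC -!mulrA; apply: expRN_mul_ge => //.
  by rewrite divr_ge0 // ltW.
by rewrite ler_pdivrMr // mul1r.
Qed.

End ExpBounds.

Lemma leq_card_set_or (I : finType) (G : {set I}) (P P1 P2 : pred I) :
    (forall i, P i -> P1 i || P2 i) ->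
  (#|[set i in G | P i]| <= #|[set i in G | P1 i]| + #|[set i in G | P2 i]|)%N.
Proof.
move=> cover; apply: leq_trans (leq_card_setU _ _).
by apply/subset_leq_card/fintype.subsetP => i; rewrite !inE => /andP[-> /cover].
Qed.

Section KSubsets.
Variables (R : realType) (T : finType) (k : nat).
Hypothesis le_kT : (k <= #|T|)%N.

Let p : R := k%:R / #|T|%:R.

Lemma card_ksubsets_supset_le (A : {set T}) :
  #|[set S in ksubsets T k | A \subset S]|%:R <= 'C(#|T|, k)%:R * p ^+ #|A|.
Proof. by apply: ler_natr_ratio_expn; [exact: max_card | exact: leq_card_ksubsets_supset]. Qed.

Lemma card_ksubsets_avoid_le (A : {set T}) :
  #|[set S in ksubsets T k | A \subset ~: S]|%:R <= 'C(#|T|, k)%:R * (1 - p) ^+ #|A|.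
Proof.
have [T0|T_gt0] := posnP #|T|.
  have A0 : #|A| = 0%N by apply/eqP; rewrite -leqn0 -T0 max_card.
  rewrite A0 expr0 mulr1 ler_nat -card_ksubsets.
  by apply/subset_leq_card/fintype.subsetP => S; rewrite inE => /andP[].
have -> : 1 - p = (#|T| - k)%:R / #|T|%:R.
  by rewrite natrB // mulrBl divff // pnatr_eq0 -lt0n.
by apply: ler_natr_ratio_expn; [exact: max_card | exact: leq_card_ksubsets_avoid].
Qed.

Let p_ge0 : 0 <= p. Proof. by case/andP: (natr_ratio_01 R le_kT). Qed.
Let p_le1 : p <= 1. Proof. by case/andP: (natr_ratio_01 R le_kT). Qed.

Lemma ksubsets_sum_prod_1D_le (c : T -> R) : (forall i, 0 <= c i) ->
  \sum_(S in ksubsets T k) \prod_(i in S) (1 + c i)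
    <= 'C(#|T|, k)%:R * \prod_i (1 + p * c i).
Proof.
move=> c_ge0.
have indicator (S : {set T}) : \prod_(i in S) (1 + c i) = \prod_i (c i * (i \in S)%:R + 1).
  rewrite big_mkcond; apply: eq_bigr => i _.
  by case: (i \in S); rewrite /= ?mulr1 ?mulr0 ?add0r // addrC.
rewrite (eq_bigr _ (fun S _ => indicator S)) -card_ksubsets.
under [X in _ <= _ * X]eq_bigr do rewrite addrC.
apply: (@sum_prod_inclusion_le _ _ _ id) => // A.
by rewrite card_ksubsets; exact: card_ksubsets_supset_le.
Qed.

Lemma ksubsets_sum_prod_1B_le (c : T -> R) : (forall i, 0 <= c i <= 1) ->
  \sum_(S in ksubsets T k) \prod_(i in S) (1 - c i)
    <= 'C(#|T|, k)%:R * \prod_i (1 - p * c i).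
Proof.
move=> c01.
have indicator (S : {set T}) :
    \prod_(i in S) (1 - c i) = \prod_i (c i * (i \in ~: S)%:R + (1 - c i)).
  rewrite big_mkcond; apply: eq_bigr => i _; rewrite inE.
  by case: (i \in S); rewrite /= ?mulr1 ?mulr0 ?add0r // addrC subrK.
have split_p i : 1 - p * c i = (1 - p) * c i + (1 - c i) by ring.
rewrite (eq_bigr _ (fun S _ => indicator S)) -card_ksubsets (eq_bigr _ (fun i _ => split_p i)).
apply: sum_prod_inclusion_le => [i|i||A].
- by rewrite subr_ge0; case/andP: (c01 i).
- by case/andP: (c01 i).
- by rewrite subr_ge0.
- by rewrite card_ksubsets; exact: card_ksubsets_avoid_le.
Qed.

Lemma ksubsets_mgf_upper (w : T -> R) (lam a : R) : (forall i, 0 <= w i) -> 0 <= lam ->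
  #|[set S in ksubsets T k | a <= \sum_(i in S) w i]|%:R * expR (lam * a)
    <= 'C(#|T|, k)%:R * expR (p * \sum_i (expR (lam * w i) - 1)).
Proof.
move=> w_ge0 lam_ge0.
apply: (le_trans (card_mul_le_sum (G := ksubsets T k) (P := fun S => a <= \sum_(i in S) w i)
  (f := fun S => expR (lam * \sum_(i in S) w i)) _ _)).
- by move=> S; exact: expR_ge0.
- by move=> S _ le_a; rewrite ler_expR ler_wpM2l.
have c_ge0 i : 0 <= expR (lam * w i) - 1 by rewrite subr_ge0 -expR0 ler_expR mulr_ge0.
have mgf (S : {set T}) :
    expR (lam * \sum_(i in S) w i) = \prod_(i in S) (1 + (expR (lam * w i) - 1)).
  by rewrite mulr_sumr expR_sum; apply: eq_bigr => i _; rewrite addrC subrK.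
rewrite (eq_bigr _ (fun S _ => mgf S)); apply: le_trans (ksubsets_sum_prod_1D_le c_ge0) _.
rewrite ler_wpM2l // mulr_sumr; apply: prodr_1D_le_expR_sum => i.
by rewrite addr_ge0 // mulr_ge0.
Qed.

Lemma ksubsets_mgf_lower (w : T -> R) (lam a : R) : (forall i, 0 <= w i) -> 0 <= lam ->
  #|[set S in ksubsets T k | \sum_(i in S) w i <= a]|%:R * expR (- (lam * a))
    <= 'C(#|T|, k)%:R * expR (- (p * \sum_i (1 - expR (- (lam * w i))))).
Proof.
move=> w_ge0 lam_ge0.
apply: (le_trans (card_mul_le_sum (G := ksubsets T k) (P := fun S => \sum_(i in S) w i <= a)
  (f := fun S => expR (- (lam * \sum_(i in S) w i))) _ _)).
- by move=> S; exact: expR_ge0.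
- by move=> S _ le_a; rewrite ler_expR lerN2 ler_wpM2l.
have c01 i : 0 <= 1 - expR (- (lam * w i)) <= 1.
  rewrite subr_ge0 -expR0 ler_expR oppr_le0 mulr_ge0 //=.
  by rewrite lerBlDr lerDl expR_ge0.
have mgf (S : {set T}) :
    expR (- (lam * \sum_(i in S) w i)) = \prod_(i in S) (1 - (1 - expR (- (lam * w i)))).
  by rewrite mulr_sumr -sumrN expR_sum; apply: eq_bigr => i _; rewrite opprB addrC subrK.
rewrite (eq_bigr _ (fun S _ => mgf S)); apply: le_trans (ksubsets_sum_prod_1B_le c01) _.
rewrite ler_wpM2l // mulr_sumr -sumrN; apply: prodr_1D_le_expR_sum => i.
by case/andP: (c01 i) => c_ge0 c_le1; rewrite subr_ge0 mulr_ile1.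
Qed.

Lemma ksubsets_upper_tail (w : T -> R) (D mu delta a : R) :
    0 < D -> (forall i, 0 <= w i <= D) -> 0 <= delta <= 1 ->
    p * \sum_i w i <= mu -> (1 + delta) * mu <= a ->
  #|[set S in ksubsets T k | a <= \sum_(i in S) w i]|%:R
    <= 'C(#|T|, k)%:R * expR (- (delta ^+ 2 * mu / (8 * D))).
Proof.
move=> D_gt0 w0D /andP[delta_ge0 delta_le1] le_mu le_a.
set t := delta / 4; set lam := t / D.
have w_ge0 i : 0 <= w i by case/andP: (w0D i).
have t_ge0 : 0 <= t by rewrite divr_ge0.
have lam_ge0 : 0 <= lam by rewrite divr_ge0 // ltW.
have moment : p * \sum_i (expR (lam * w i) - 1) <= (t + 2 * t ^+ 2) / D * mu.
  have t_le : t <= 1 / 2 by rewrite /t; lra.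
  rewrite (le_trans (ler_wpM2l p_ge0 (sum_expR_sub1_le D_gt0 w0D t_ge0 t_le))) // mulrCA.
  by rewrite ler_wpM2l // divr_ge0 ?(ltW D_gt0) // addr_ge0 ?mulr_ge0 ?sqr_ge0.
rewrite -(ler_pM2r (expR_gt0 (lam * a))).
apply: le_trans (ksubsets_mgf_upper a w_ge0 lam_ge0) _.
rewrite -[X in _ <= X]mulrA ler_wpM2l // -expRD ler_expR.
have exponent : (t + 2 * t ^+ 2) / D * mu
                = - (delta ^+ 2 * mu / (8 * D)) + lam * ((1 + delta) * mu).
  by rewrite /lam /t; field; rewrite gt_eqF.
have : lam * ((1 + delta) * mu) <= lam * a by exact: ler_wpM2l.
lra.
Qed.

Lemma ksubsets_lower_tail (w : T -> R) (D mu delta a : R) :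
    0 < D -> (forall i, 0 <= w i <= D) -> 0 <= delta <= 1 ->
    mu <= p * \sum_i w i -> a <= (1 - delta) * mu ->
  #|[set S in ksubsets T k | \sum_(i in S) w i <= a]|%:R
    <= 'C(#|T|, k)%:R * expR (- (delta ^+ 2 * mu / (4 * D))).
Proof.
move=> D_gt0 w0D /andP[delta_ge0 delta_le1] le_mu le_a.
set t := delta / 2; set lam := t / D.
have w_ge0 i : 0 <= w i by case/andP: (w0D i).
have t_ge0 : 0 <= t by rewrite divr_ge0.
have lam_ge0 : 0 <= lam by rewrite divr_ge0 // ltW.
have moment : (t - t ^+ 2) / D * mu <= p * \sum_i (1 - expR (- (lam * w i))).
  rewrite (le_trans _ (ler_wpM2l p_ge0 (sum_1_sub_expRN_ge D_gt0 w0D t_ge0))) // mulrCA.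
  rewrite ler_wpM2l // divr_ge0 ?(ltW D_gt0) // subr_ge0 expr2 ler_piMr //.
  by rewrite /t; lra.
rewrite -(ler_pM2r (expR_gt0 (- (lam * a)))).
apply: le_trans (ksubsets_mgf_lower a w_ge0 lam_ge0) _.
rewrite -[X in _ <= X]mulrA ler_wpM2l // -expRD ler_expR.
have exponent : (t - t ^+ 2) / D * mu
                = delta ^+ 2 * mu / (4 * D) + lam * ((1 - delta) * mu).
  by rewrite /lam /t; field; rewrite gt_eqF.
have : lam * a <= lam * ((1 - delta) * mu) by exact: ler_wpM2l.
lra.
Qed.

Lemma ksubsets_two_sided_tail (w : T -> R) (D mu_lo mu_hi delta a b : R) :
    0 < D -> (forall i, 0 <= w i <= D) -> 0 <= delta <= 1 ->
    mu_lo <= p * \sum_i w i <= mu_hi ->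
    a <= (1 - delta) * mu_lo -> (1 + delta) * mu_hi <= b ->
  #|[set S in ksubsets T k | ~~ (a <= \sum_(i in S) w i <= b)]|%:R
    <= 'C(#|T|, k)%:R * (expR (- (delta ^+ 2 * mu_lo / (4 * D)))
                         + expR (- (delta ^+ 2 * mu_hi / (8 * D)))).
Proof.
move=> D_gt0 w0D delta01 /andP[le_lo le_hi] le_a le_b.
apply: le_trans (_ : _ <= (#|[set S in ksubsets T k | \sum_(i in S) w i <= a]|
                        + #|[set S in ksubsets T k | b <= \sum_(i in S) w i]|)%:R) _.
  rewrite ler_nat; apply: leq_card_set_or => S.
  by rewrite negb_and -!ltNge => /orP[] /ltW ->; rewrite ?orbT.
rewrite natrD mulrDr lerD //.
  exact: ksubsets_lower_tail le_a.
exact: ksubsets_upper_tail le_b.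
Qed.

End KSubsets.

Section PairCounting.
Variables (U V : finType) (A : {set U}) (B : {set V}) (P : U -> V -> bool).

Let pairs := [set uv | [&& uv.1 \in A, uv.2 \in B & P uv.1 uv.2]].

Lemma card_pairs_sum : #|pairs| = (\sum_(v in B) #|[set u in A | P u v]|)%N.
Proof.
rewrite -sum1dep_card; under [RHS]eq_bigr do rewrite -sum1dep_card.
rewrite (exchange_big_dep (mem A)) => [|v u _ /andP[] //].
rewrite pair_big_dep; apply: eq_bigl => -[u v] /=.
by case: (u \in A); case: (v \in B).
Qed.

Lemma card_pairs_le_mul : (#|pairs| <= #|A| * #|B|)%N.
Proof.
rewrite -cardsX; apply/subset_leq_card/fintype.subsetP => -[u v].
by rewrite !inE => /and3P[-> -> _].
Qed.

Lemma card_pairs_le_cond (R : numDomainType) (Q : pred V) (c : R) : 0 <= c ->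
    (forall v, v \in B -> Q v -> #|[set u in A | P u v]|%:R <= c) ->
  #|pairs|%:R <= #|A|%:R * #|[set v in B | ~~ Q v]|%:R + #|B|%:R * c.
Proof.
move=> c_ge0 le_c; rewrite card_pairs_sum natr_sum -sumr_indicator mulr_sumr.
rewrite [_ * c]mulr_natl -(sumr_const (mem B) c) -big_split /=; apply: ler_sum => v vB.
have le_A : #|[set u in A | P u v]|%:R <= #|A|%:R :> R.
  by rewrite ler_nat; apply/subset_leq_card/fintype.subsetP => u; rewrite inE => /andP[].
case: (boolP (Q v)) => Qv; first by rewrite mulr0 add0r le_c.
by rewrite mulr1 (le_trans le_A) // lerDl.
Qed.

End PairCounting.

Section ProbST.
Variables (R : realType) (X Y : finType) (k l : nat) (B : {set X} -> {set Y} -> bool).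
Hypotheses (hk : (k <= #|X|)%N) (hl : (l <= #|Y|)%N).

Let CX_gt0 : 0 < 'C(#|X|, k)%:R :> R. Proof. by rewrite ltr0n bin_gt0. Qed.
Let CY_gt0 : 0 < 'C(#|Y|, l)%:R :> R. Proof. by rewrite ltr0n bin_gt0. Qed.

Lemma prob_ST_le1 : prob_ST R k l B <= 1.
Proof.
rewrite /prob_ST !card_ksubsets natrM ler_pdivrMr ?mulr_gt0 // mul1r -natrM ler_nat.
by rewrite -!card_ksubsets card_pairs_le_mul.
Qed.

Lemma prob_ST_le_cond (Q : pred {set Y}) (c : R) : 0 <= c ->
    (forall T, T \in ksubsets Y l -> Q T ->
       #|[set S in ksubsets X k | B S T]|%:R <= 'C(#|X|, k)%:R * c) ->
  prob_ST R k l B <= #|[set T in ksubsets Y l | ~~ Q T]|%:R / 'C(#|Y|, l)%:R + c.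
Proof.
move=> c_ge0 le_c; rewrite /prob_ST !card_ksubsets natrM ler_pdivrMr ?mulr_gt0 //.
apply: le_trans (card_pairs_le_cond _ le_c) _; first by rewrite mulr_ge0 ?ler0n.
rewrite !card_ksubsets le_eqVlt; apply/orP; left; apply/eqP.
by field; rewrite gt_eqF.
Qed.

End ProbST.

Definition deg_into (X Y : finType) (E : {set X * Y}) (T : {set Y}) (x : X) : nat :=
  #|[set y in T | (x, y) \in E]|.

Section EdgeCounts.
Variables (X Y : finType) (E : {set X * Y}).

Lemma card_edges_between (S : {set X}) (T : {set Y}) :
  #|edges_between E S T| = (\sum_(x in S) deg_into E T x)%N.
Proof.
rewrite -sum1_card; under [RHS]eq_bigr do rewrite /deg_into -sum1dep_card.
rewrite pair_big_dep; apply: eq_bigl => -[x y] /=.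
by rewrite /edges_between !inE andbC -andbA.
Qed.

Lemma sum_deg_into (T : {set Y}) : (\sum_x deg_into E T x = \sum_(y in T) degY E y)%N.
Proof.
under eq_bigr do rewrite /deg_into -sum1dep_card.
rewrite (exchange_big_dep (mem T)) => [|x y _ /andP[] //] /=.
by apply: eq_bigr => y yT; rewrite /degY -sum1dep_card; apply: eq_bigl => x; rewrite yT.
Qed.

Lemma sum_degY : (\sum_y degY E y)%N = #|E|.
Proof.
under eq_bigr do rewrite /degY -sum1dep_card.
rewrite (exchange_big_dep xpredT) //= pair_big_dep -sum1_card.
by apply: eq_bigl => -[x y].
Qed.

Lemma deg_into_le (T : {set Y}) (x : X) : (deg_into E T x <= degX E x)%N.
Proof. by apply/subset_leq_card/fintype.subsetP => y; rewrite !inE => /andP[]. Qed.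

End EdgeCounts.

Lemma expRN_div_mulr_le (R : realType) (x y c1 c2 D : R) :
    0 < D -> 0 < c1 -> 0 < c2 -> y / c2 <= x / c1 ->
  expR (- (x / (c1 * D))) <= expR (- (y / (c2 * D))).
Proof.
move=> D_gt0 c1_gt0 c2_gt0 le_yx.
by rewrite ler_expR lerN2 !invfM !mulrA ler_pM2r // invr_gt0.
Qed.

Section Concentration.
Variables (R : realType) (X Y : finType) (E : {set X * Y}) (dmax : nat).
Hypotheses (hdX : forall x, (degX E x <= dmax)%N) (hdY : forall y, (degY E y <= dmax)%N).
Hypothesis dmax_gt0 : (0 < dmax)%N.
Variables (k l : nat) (gamma : R).
Hypotheses (hk : (k <= #|X|)%N) (hl : (l <= #|Y|)%N).
Hypotheses (gamma_ge0 : 0 <= gamma) (gamma_lt : gamma < 1 / 2).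

Let D : R := dmax%:R.
Let p : R := k%:R / #|X|%:R.
Let q : R := l%:R / #|Y|%:R.
Let s : R := (k * l * #|E|)%:R / (#|X| * #|Y|)%:R.
Let eps : R := expR (- (gamma ^+ 2 * s / (54 * D))).

Let D_gt0 : 0 < D. Proof. by rewrite ltr0n. Qed.
Let p_ge0 : 0 <= p. Proof. by case/andP: (natr_ratio_01 R hk). Qed.
Let p_le1 : p <= 1. Proof. by case/andP: (natr_ratio_01 R hk). Qed.
Let q_ge0 : 0 <= q. Proof. by case/andP: (natr_ratio_01 R hl). Qed.
Let sE : s = p * (q * #|E|%:R). Proof. by rewrite /s /p /q !natrM invfM; ring. Qed.
Let s_ge0 : 0 <= s. Proof. by rewrite divr_ge0 ?ler0n. Qed.
Let s_le : s <= q * #|E|%:R. Proof. by rewrite sE ler_piMl // mulr_ge0 ?ler0n. Qed.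

Let le_eps (c x : R) :
  0 < c -> gamma ^+ 2 * s / 54 <= x / c -> expR (- (x / (c * D))) <= eps.
Proof. by move=> c_gt0; apply: expRN_div_mulr_le. Qed.

(* The relative deviation gamma is split between the two stages as 2 gamma / 5
   for the degree sum of T and gamma / 2 for the sum over S:
   (1 + gamma / 2) (1 + 2 gamma / 5) <= 1 + gamma is where gamma <= 1/2 is used. *)
Definition balanced (T : {set Y}) : bool :=
  (1 - 2 * gamma / 5) * (q * #|E|%:R) <= \sum_(y in T) (degY E y)%:R
    <= (1 + 2 * gamma / 5) * (q * #|E|%:R).

Lemma card_unbalanced_le :
  #|[set T in ksubsets Y l | ~~ balanced T]|%:R <= 'C(#|Y|, l)%:R * (2 * eps).
Proof.
(* lra does not see section hypotheses, hence the local copies. *)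
have [g0 g1] := (gamma_ge0, gamma_lt).
have g2s : 0 <= gamma ^+ 2 * s := mulr_ge0 (sqr_ge0 gamma) s_ge0.
have le_g2s := ler_wpM2l (sqr_ge0 gamma) s_le.
rewrite /balanced; apply: le_trans (ksubsets_two_sided_tail (delta := 2 * gamma / 5)
  (mu_lo := q * #|E|%:R) (mu_hi := q * #|E|%:R) hl D_gt0 _ _ _ (lexx _) (lexx _)) _.
- by move=> y; rewrite ler0n /D ler_nat hdY.
- by apply/andP; split; lra.
- by rewrite -natr_sum sum_degY lexx.
rewrite ler_wpM2l ?ler0n // [2 * eps]mulr_natl [eps *+ 2]mulr2n.
by apply: lerD; apply: le_eps => //; lra.
Qed.

Lemma card_bad_le_balanced (T : {set Y}) : balanced T ->
  #|[set S in ksubsets X k | ~~ ((1 - gamma) * s <= #|edges_between E S T|%:R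
                                  <= (1 + gamma) * s)]|%:R <= 'C(#|X|, k)%:R * (2 * eps).
Proof.
move=> /andP[bal_lo bal_hi]; have [g0 g1] := (gamma_ge0, gamma_lt).
have gs : 0 <= gamma * s := mulr_ge0 g0 s_ge0.
have g2s : 0 <= gamma ^+ 2 * s := mulr_ge0 (sqr_ge0 gamma) s_ge0.
have g3s : 0 <= gamma * (gamma ^+ 2 * s) := mulr_ge0 g0 g2s.
have g2s_le : gamma * (gamma * s) <= 1 / 2 * (gamma * s) by rewrite ler_wpM2r // ltW.
have g3s_le : gamma * (gamma ^+ 2 * s) <= 1 / 2 * (gamma ^+ 2 * s) by rewrite ler_wpM2r // ltW.
have sum_w : \sum_x (deg_into E T x)%:R = \sum_(y in T) (degY E y)%:R :> R.
  by rewrite -!natr_sum sum_deg_into.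
under eq_finset => S do rewrite card_edges_between natr_sum.
apply: le_trans (ksubsets_two_sided_tail (delta := gamma / 2)
  (mu_lo := (1 - 2 * gamma / 5) * s) (mu_hi := (1 + 2 * gamma / 5) * s) hk D_gt0 _ _ _ _ _) _.
- by move=> x; rewrite ler0n /D ler_nat (leq_trans (deg_into_le _ _ _)).
- by apply/andP; split; lra.
- rewrite sum_w sE; apply/andP; split.
    by rewrite mulrCA ler_wpM2l.
  by rewrite [X in _ <= X]mulrCA ler_wpM2l.
- lra.
- lra.
rewrite ler_wpM2l ?ler0n // [2 * eps]mulr_natl [eps *+ 2]mulr2n.
by apply: lerD; apply: le_eps => //; lra.
Qed.

End Concentration.

Theorem lemma2p9 (R : realType) (X Y : finType) (E : {set X * Y}) (dmax : nat)
  (hdX : forall x : X, (degX E x <= dmax)%N)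
  (hdY : forall y : Y, (degY E y <= dmax)%N)
  (k l : nat) (hk : (k <= #|X|)%N) (hl : (l <= #|Y|)%N)
  (gamma : R) (hg0 : 0 <= gamma) (hg1 : gamma < 1 / 2) :
  let s : R := (k * l * #|E|)%:R / (#|X| * #|Y|)%:R in
  prob_ST R k l (fun S T =>
      ~~ (((1 - gamma) * s <= (#|edges_between E S T|)%:R)
          && ((#|edges_between E S T|)%:R <= (1 + gamma) * s)))
  <= 4 * expR (- (gamma ^+ 2 * s / (54 * dmax%:R))).
Proof.
cbv zeta; have [dmax0|dmax_gt0] := posnP dmax.
  rewrite dmax0 mulr0 invr0 mulr0 oppr0 expR0 mulr1.
  by apply: le_trans (prob_ST_le1 _ _ hk hl) _; rewrite ler1n.
set eps := expR _; have eps2_ge0 : 0 <= 2 * eps by rewrite mulr_ge0 ?expR_ge0.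
apply: le_trans (prob_ST_le_cond hk hl eps2_ge0
  (fun T _ balT => card_bad_le_balanced hdX dmax_gt0 hk hg0 hg1 balT)) _.
have -> : 4 * eps = 2 * eps + 2 * eps by ring.
rewrite lerD // ler_pdivrMr ?ltr0n ?bin_gt0 // mulrC.
exact: (card_unbalanced_le hdY dmax_gt0 hk hl hg0 hg1).
Qed.
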